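(* Let $G$ be a finite group and $\xi$ a linear character of $G$. Then $$\tfrac12 n_C+n_\xi=\tfrac12 n^{C,\xi}\qquad\text{and}\qquad n_R-2n_\xi=n^{R,\xi}.$$
   Context: For conjugacy classes $C$ of $G$ let $C^{-1}=\{c^{-1}\mid c\in C\}$. $n_C$ = number of conjugacy classes with $C\neq C^{-1}$; $n_\xi$ = number of conjugacy classes with $C=C^{-1}$ and $\xi\equiv-1$ on $C$; $n_{**}=|\{C_g\cup C_{g^{-1}}\mid g\in G\}|$ and $n_R=n_{**}-\frac12n_C$ (the number of classes with $C=C^{-1}$); $n^{R,\xi}$ = number of irreducible characters $\chi$ with $\chi=\bar\chi\otimes\xi$; $n^{C,\xi}$ = number of irreducible characters $\chi$ with $\chi\neq\bar\chi\otimes\xi$. Here $\bar\chi\otimes\xi$ is $g\mapsto\overline{\chi(g)}\xi(g)$. *)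

From mathcomp Require Import all_boot all_order all_algebra all_fingroup all_solvable all_field all_character.
Set Implicit Arguments. Unset Strict Implicit. Unset Printing Implicit Defensive.
Import GRing.Theory Num.Theory.
Local Open Scope ring_scope.
Local Open Scope group_scope.

Section Counts.
Variables (gT : finGroupType) (G : {group gT}).

Definition cls_inv (C : {set gT}) : {set gT} := [set c^-1 | c in C].

Definition n_C : nat := #|[set C in classes G | cls_inv C != C]|.

Definition n_xi (xi : 'CF(G)) : nat :=
  #|[set C in classes G | (cls_inv C == C) && [forall c in C, xi c == -1]]|.

Definition n_starstar : nat := #|[set (g ^: G) :|: (g^-1 ^: G) | g in G]|.

(* n_R := n_** - 1/2 n_C  (the number of classes with C = C^{-1}) *)
Definition n_R : algC := (n_starstar%:R - (n_C%:R / 2%:R))%R.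

Definition twisted_real (xi : 'CF(G)) (i : Iirr G) : bool :=
  'chi_i == (('chi_i)^*%CF * xi)%R.

Definition nR_xi (xi : 'CF(G)) : nat := #|[set i : Iirr G | twisted_real xi i]|.
Definition nC_xi (xi : 'CF(G)) : nat := #|[set i : Iirr G | ~~ twisted_real xi i]|.

End Counts.

From mathcomp Require Import all_boot all_order all_algebra all_fingroup all_solvable all_field all_character.
From mathcomp Require Import ring.
Set Implicit Arguments. Unset Strict Implicit. Unset Printing Implicit Defensive.
Import GRing.Theory Num.Theory.
Local Open Scope ring_scope.

(* Count the irreducible characters and the conjugacy classes in two ways.
   There are as many irreducible characters as classes, and the classes split
   into the real ones (C = C^-1) and the n_C non-real ones, which pair up into
   n_C/2 sets C u C^-1.  The number of chi with chi = chi^* xi is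
   sum_i '[chi_i, chi_i^* xi]; the second orthogonality relation evaluates
   sum_i chi_i(x)^2 as |C_G(x)| or 0 according as the class of x is real or
   not, so this sum collapses to the sum of xi^* over the real classes.  On a
   real class xi takes the value 1 or -1, which gives n_R - 2 n_xi. *)

Lemma natr_card_setId (R : pzSemiRingType) (T : finType) (A : {pred T})
    (P : pred T) :
  #|[set x in A | P x]|%:R = \sum_(x in A) (P x)%:R :> R.
Proof.
rewrite -sum1_card natr_sum [LHS]big_mkcond [RHS]big_mkcond /=.
by apply: eq_bigr => x _; rewrite inE; case: (x \in A); case: (P x).
Qed.

Section Classes.
Variables (gT : finGroupType) (G : {group gT}).

Definition real_classes : {set {set gT}} :=
  [set C in classes G | cls_inv C == C].

Lemma cls_invK : involutive (@cls_inv gT).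
Proof.
move=> C; rewrite /cls_inv -imset_comp (eq_imset _ invgK) /=.
exact: imset_id.
Qed.

Lemma cls_inv_class x : cls_inv (x ^: G)%g = (x^-1 ^: G)%g.
Proof.
rewrite classVg /cls_inv; apply/setP => y; rewrite inE.
apply/imsetP/idP => [[c Hc ->] | Hy]; first by rewrite invgK.
by exists y^-1%g; rewrite ?invgK.
Qed.

Lemma cls_inv_classes C : C \in classes G -> cls_inv C \in classes G.
Proof. by case/imsetP=> x Gx ->; rewrite cls_inv_class mem_classes ?groupV. Qed.

Lemma classU_inv_eq C D : C \in classes G -> D \in classes G ->
  (C :|: cls_inv C == D :|: cls_inv D) = (C == D) || (C == cls_inv D).
Proof.
case/imsetP=> x Gx ->; case/imsetP=> y Gy ->.
apply/idP/orP => [/eqP eqCD | [/eqP-> // | /eqP->]]; last first.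
  by rewrite cls_invK setUC.
have : x \in (x ^: G)%g :|: cls_inv (x ^: G)%g by rewrite inE class_refl.
by rewrite eqCD cls_inv_class inE => /orP[] /class_eqP->; [left | right].
Qed.

Lemma card_real_classes_add_n_C : (#|real_classes| + n_C G)%N = #|classes G|.
Proof.
rewrite -[RHS](cardsID [set C | cls_inv C == C]) /real_classes /n_C setIdE.
by congr (_ + _)%N; apply: eq_card => C; rewrite !inE andbC.
Qed.

Lemma n_starstarE :
  (n_starstar G)%:R = #|real_classes|%:R + (n_C G)%:R / 2%:R :> algC.
Proof.
pose pairU (C : {set gT}) := C :|: cls_inv C.
have -> : n_starstar G = #|pairU @: classes G|.
  apply: eq_card => S; apply/imsetP/imsetP.
    case=> g Gg ->; exists (g ^: G)%g; first exact: mem_classes.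
    by rewrite /pairU cls_inv_class.
  by case=> _ /imsetP[g Gg ->] ->; exists g; rewrite // /pairU cls_inv_class.
pose w (C : {set gT}) : algC := if cls_inv C == C then 1 else 2%:R^-1.
have fibre_weight S : S \in pairU @: classes G ->
    \sum_(C in classes G | pairU C == S) w C = 1.
  case/imsetP=> D cD ->; have cD' := cls_inv_classes cD.
  rewrite (eq_bigl (mem [set D; cls_inv D])) => [|C]; last first.
    rewrite !inE; have [cC | ncC] /= := boolP (C \in classes G).
      by rewrite classU_inv_eq.
    by apply/esym/norP; split; apply: contraNneq ncC => ->.
  have [realD | nrealD] := eqVneq (cls_inv D) D.
    by rewrite realD setUid big_set1 /w realD eqxx.
  rewrite big_setU1 ?big_set1 /w ?cls_invK ?(negbTE nrealD) //=; last first.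
    by rewrite inE eq_sym.
  by rewrite [D == _]eq_sym (negbTE nrealD) [RHS]splitr mul1r.
rewrite -sumr_const -(eq_bigr _ fibre_weight) -partition_big_imset /=.
rewrite /real_classes /n_C !natr_card_setId mulr_suml -big_split /=.
apply: eq_bigr => C _; rewrite /w.
by case: (cls_inv C == C); rewrite /= ?mul0r ?mul1r ?addr0 ?add0r.
Qed.

Lemma n_R_real_classes : n_R G = #|real_classes|%:R.
Proof. by rewrite /n_R n_starstarE addrK. Qed.

Lemma sum_irr_sqr x : x \in G ->
  \sum_i 'chi[G]_i x ^+ 2 =
    (cls_inv (x ^: G)%g == (x ^: G)%g)%:R * #|G|%:R / #|(x ^: G)%g|%:R.
Proof.
move=> Gx; rewrite (eq_bigr (fun i => 'chi_i x * ('chi_i x^-1%g)^*)); last first.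
  by move=> i _; rewrite irr_inv conjCK expr2.
rewrite second_orthogonality_relation ?groupV // cls_inv_class.
have -> : (x \in (x^-1 ^: G)%g) = ((x^-1 ^: G)%g == (x ^: G)%g).
  by rewrite eq_sym; apply/class_eqP/eqP.
rewrite -mulr_natl -mulrA; congr (_ * _).
rewrite -(Lagrange (subsetIl G 'C[x]%g)) index_cent1 natrM mulfK //.
by rewrite -index_cent1 neq0CiG.
Qed.

Lemma nR_add_nC_xi (xi : 'CF(G)) :
  (nR_xi xi + nC_xi xi)%N = #|classes G|.
Proof.
rewrite -NirrE -[Nirr G]card_ord -(cardsC [set i | twisted_real xi i]).
by congr (_ + _)%N; apply: eq_card => i; rewrite !inE.
Qed.

End Classes.

Section LinearCharacter.
Variables (gT : finGroupType) (G : {group gT}) (xi : 'CF(G)).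
Hypothesis lin_xi : xi \is a linear_char.

Lemma lin_char_real_class y : y \in G -> y^-1%g \in (y ^: G)%g ->
  xi y = 1 \/ xi y = -1.
Proof.
move=> Gy /imsetP[g Gg yV].
have xiV : xi y^-1%g = xi y by rewrite yV cfunJ.
have : (xi y ^+ 2 == 1).
  by rewrite expr2 -{1}xiV (lin_charV lin_xi Gy) mulVf ?(lin_char_neq0 lin_xi).
by rewrite sqrf_eq1 => /orP[] /eqP; [left | right].
Qed.

Lemma nR_xi_cfdot : (nR_xi xi)%:R = \sum_i '['chi[G]_i, ('chi_i)^*%CF * xi].
Proof.
rewrite /nR_xi -[[set i | _]]/[set i in predT | twisted_real xi i].
rewrite natr_card_setId; apply: eq_bigr => i _.
have : ('chi_i)^*%CF * xi \in irr G by rewrite mulrC mul_lin_irr ?cfConjC_irr.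
by rewrite /twisted_real => /cfIirrE <-; rewrite cfdot_irr (inj_eq irr_inj).
Qed.

Lemma conjC_lin_char_real_class C : C \in classes G ->
  (xi (repr C))^* * (cls_inv C == C)%:R =
    (cls_inv C == C)%:R
      - 2%:R * ((cls_inv C == C) && [forall c in C, xi c == -1])%:R.
Proof.
case/repr_classesP=> Gy defC; set y := repr C in Gy defC *; rewrite defC.
have [realC | _] := eqVneq; last by rewrite mulr0 mulr0 subr0.
have yV : y^-1%g \in (y ^: G)%g by rewrite -realC cls_inv_class class_refl.
have xiC : [forall c in (y ^: G)%g, xi c == -1] = (xi y == -1).
  apply/forall_inP/eqP => [xiN1 | xiN1 _ /imsetP[g Gg ->]].
    exact/eqP/xiN1/class_refl.
  by rewrite cfunJ // xiN1.
rewrite xiC /= mulr1; case: (lin_char_real_class Gy yV) => ->.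
  by rewrite conjC1 -addr_eq0 -mulr2n pnatr_eq0 mulr0 subr0.
by rewrite rmorphN1 eqxx mulr1 mulr2n opprD addrA subrr add0r.
Qed.

Lemma nR_xi_real_classes :
  (nR_xi xi)%:R = #|real_classes G|%:R - 2%:R * (n_xi xi)%:R :> algC.
Proof.
rewrite nR_xi_cfdot.
under eq_bigr => i _ do rewrite cfdotE.
rewrite -mulr_sumr exchange_big /=.
under eq_bigr => x Gx.
  rewrite (eq_bigr (fun i => (xi x)^* * 'chi_i x ^+ 2)) => [|i _]; last first.
    by rewrite !cfunE rmorphM /= conjCK mulrA mulrC expr2.
  rewrite -mulr_sumr sum_irr_sqr //.
  over.
rewrite mulr_sumr sum_by_classes => [|x h Gx Gh]; last first.
  by rewrite cfunJ // classGidl.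
rewrite /real_classes /n_xi !natr_card_setId mulr_sumr -sumrB.
apply: eq_bigr => C cC; rewrite -conjC_lin_char_real_class //.
case/repr_classesP: cC => _ defC; rewrite -defC.
have nzC : #|C|%:R != 0 :> algC by rewrite defC -index_cent1 neq0CiG.
by field; rewrite nzC neq0CG.
Qed.

End LinearCharacter.

Theorem theorem3p9 (gT : finGroupType) (G : {group gT}) (xi : 'CF(G))
  (Hxi : xi \is a linear_char) :
  (n_C G)%:R / 2%:R + (n_xi xi)%:R = (nC_xi xi)%:R / 2%:R :> algC /\
  n_R G - 2%:R * (n_xi xi)%:R = (nR_xi xi)%:R :> algC.
Proof.
have nR := nR_xi_real_classes Hxi.
rewrite n_R_real_classes -nR; split => //.
have counts : (nR_xi xi)%:R + (nC_xi xi)%:R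
    = #|real_classes G|%:R + (n_C G)%:R :> algC.
  by rewrite -!natrD nR_add_nC_xi card_real_classes_add_n_C.
have -> : (nC_xi xi)%:R = (n_C G)%:R + 2%:R * (n_xi xi)%:R :> algC.
  by apply: (addrI (nR_xi xi)%:R); rewrite counts nR; ring.
by field.
Qed.
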